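(* Let $q>1$, $A>0$, $\alpha=q/(q-1)$, and $c(A,q)=\tfrac12\big(A(4q-2)/q\big)^q$. Let $V\ge0$ be a maximizer of $y_V(1)$ over non-negative $V\in L^q[0,1]$ with $\|V\|_{L^q}\le A$. Let $H$ and $\Psi$ be associated with $V$, that is: - $\Psi>0$ on $(0,1)$; - $\Psi''-|\Psi|^\alpha+2H=0$; - $\Psi(0)=\Psi(1)=0$; - $\Psi'(0)=H-c(A,q)$; - $V=\frac{q}{4q-2}\Psi^{1/(q-1)}$. Then $H\in(c(A,q),h(A,q))$, where $h(A,q)$ is as defined below.
   Context: For $V\in L^q[0,1]$, $y_V$ denotes the solution of $-y''+Vy=0$ on $[0,1]$ with $y(0)=0$, $y'(0)=1$. The number $h(A,q)$ is the unique $H>c(A,q)$ such that $(2H)^{1/\alpha}$ is a root of $f_H(x)=\frac{2}{\alpha+1}x|x|^\alpha-4Hx+(H-c(A,q))^2$. *)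

From Stdlib Require Import Reals Lra.
Open Scope R_scope.

(* Real power x^p for x >= 0 (with 0^p = 0, the right convention for p > 0). *)
Definition rpow (x p : R) : R := if Rlt_dec 0 x then Rpower x p else 0.

Definition in01 (x : R) : Prop := 0 <= x <= 1.

Definition cont01 (W : R -> R) : Prop :=
  forall x, in01 x -> forall eps, eps > 0 -> exists delta, delta > 0 /\
    forall t, in01 t -> Rabs (t - x) < delta -> Rabs (W t - W x) < eps.

Definition admissible (q A : R) (W : R -> R) : Prop :=
  cont01 W /\ (forall x, in01 x -> 0 <= W x) /\
  exists pr : Riemann_integrable (fun t => rpow (W t) q) 0 1,
    RiemannInt pr <= rpow A q.

Definition is_yV (W y : R -> R) : Prop :=
  exists dy d2y : R -> R,
    (forall x, in01 x ->
       derivable_pt_lim y x (dy x) /\ derivable_pt_lim dy x (d2y x) /\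
       - d2y x + W x * y x = 0) /\
    y 0 = 0 /\ dy 0 = 1.

Definition is_maximizer (q A : R) (V : R -> R) : Prop :=
  admissible q A V /\
  forall y, is_yV V y ->
  forall W z, admissible q A W -> is_yV W z -> z 1 <= y 1.

Definition alpha_of (q : R) : R := q / (q - 1).

Definition c_of (A q : R) : R := / 2 * rpow (A * (4 * q - 2) / q) q.

Definition f_H (A q H x : R) : R :=
  2 / (alpha_of q + 1) * x * rpow (Rabs x) (alpha_of q) - 4 * H * x
  + (H - c_of A q) ^ 2.

Definition is_h (A q H' : R) : Prop :=
  c_of A q < H' /\ f_H A q H' (rpow (2 * H') (/ alpha_of q)) = 0.

Definition associated (A q : R) (V : R -> R) (H : R) (Psi : R -> R) : Prop :=
  exists dPsi d2Psi : R -> R,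
    (forall x, 0 < x < 1 -> Psi x > 0) /\
    (forall x, in01 x ->
       derivable_pt_lim Psi x (dPsi x) /\ derivable_pt_lim dPsi x (d2Psi x) /\
       d2Psi x - rpow (Rabs (Psi x)) (alpha_of q) + 2 * H = 0) /\
    Psi 0 = 0 /\ Psi 1 = 0 /\
    dPsi 0 = H - c_of A q /\
    (forall x, in01 x -> V x = q / (4 * q - 2) * rpow (Psi x) (/ (q - 1))).

From Stdlib Require Import Reals Lra.
Open Scope R_scope.

(* Multiplying the equation by Psi' gives the first integral Psi'^2 = f_H(Psi).
   On [0, oo) the function f_H is strictly convex with minimum at
   x0 = (2H)^(1/alpha).  At the interior maximum M of Psi we get f_H(M) = 0,
   hence f_H(x0) <= 0.  Equality is impossible: f_H would then vanish to second
   order at x0, giving Psi' <= C (x0 - Psi), and Psi could not reach x0 in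
   finite time.  As a function of H, the minimum value f_H(x0) equals
   (H - c)^2 - K H^b with 1 < b < 2, which stays positive once it is
   nonnegative beyond c; so it has a unique zero h(A,q) > c, and f_H(x0) < 0
   forces H < h(A,q).  Finally c < H because Psi'(0) = H - c cannot be
   negative, and cannot vanish since then Psi''(0) = -2H < 0.
   Only the boundary value problem is used, not the maximality of V. *)

Lemma Rpower_gt0 x p : 0 < Rpower x p.
Proof. apply exp_pos. Qed.

Lemma Rpower_base_1 p : Rpower 1 p = 1.
Proof. unfold Rpower; rewrite ln_1, Rmult_0_r; apply exp_0. Qed.

Lemma Rpower_le_self x p : 0 < x < 1 -> 1 <= p -> Rpower x p <= x.
Proof.
  intros Hx Hp; unfold Rpower; rewrite <- (exp_ln x) at 2 by lra.
  assert (ln x < 0) by (rewrite <- ln_1; apply ln_increasing; lra).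
  destruct (Req_dec p 1) as [->|]; [rewrite Rmult_1_l; lra|].
  left; apply exp_increasing; nra.
Qed.

Lemma rpow_Rpower x p : 0 < x -> rpow x p = Rpower x p.
Proof. intros; unfold rpow; destruct (Rlt_dec 0 x); [reflexivity|lra]. Qed.

Lemma rpow_nonpos x p : x <= 0 -> rpow x p = 0.
Proof. intros; unfold rpow; destruct (Rlt_dec 0 x); [lra|reflexivity]. Qed.

Lemma rpow_mult x y p : 0 <= x -> 0 <= y -> rpow (x * y) p = rpow x p * rpow y p.
Proof.
  intros [Hx| <-] [Hy| <-]; rewrite ?Rmult_0_l, ?Rmult_0_r, ?rpow_nonpos by lra; try ring.
  rewrite !rpow_Rpower by nra; symmetry; apply Rpower_mult_distr; lra.
Qed.

Lemma rpow_plus_1 x p : 0 <= x -> rpow x (p + 1) = x * rpow x p.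
Proof.
  intros [Hx| <-]; [|rewrite !rpow_nonpos by lra; ring].
  rewrite !rpow_Rpower, Rpower_plus, Rpower_1 by lra; ring.
Qed.

Lemma rpow_rpow_inv x p : 0 < x -> p <> 0 -> rpow (rpow x (/ p)) p = x.
Proof.
  intros Hx Hp; rewrite (rpow_Rpower x) by lra.
  rewrite rpow_Rpower by apply Rpower_gt0.
  rewrite Rpower_mult, Rinv_l, Rpower_1; lra.
Qed.

Lemma derivable_pt_lim_rpow x p :
  0 < x -> derivable_pt_lim (fun t => rpow t p) x (p * rpow x (p - 1)).
Proof.
  intros Hx; rewrite rpow_Rpower by lra.
  apply (derivable_pt_lim_locally_ext (fun t => Rpower t p) _ x 0 (x + 1)); [lra| |].
  - intros t Ht; rewrite rpow_Rpower; lra.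
  - apply derivable_pt_lim_power; lra.
Qed.

Lemma derivable_pt_lim_mul_rpow_abs p s : 1 <= p -> 0 <= s ->
  derivable_pt_lim (fun x => x * rpow (Rabs x) p) s ((p + 1) * rpow s p).
Proof.
  intros Hp [Hs| <-].
  - apply (derivable_pt_lim_locally_ext (fun x => rpow x (p + 1)) _ s 0 (s + 1)); [lra| |].
    + intros x Hx; rewrite Rabs_right, rpow_plus_1; lra.
    + replace p with (p + 1 - 1) at 2 by ring; apply derivable_pt_lim_rpow; lra.
  - rewrite rpow_nonpos, Rmult_0_r by lra.
    intros eps Heps.
    assert (Hd : 0 < Rmin 1 eps) by (apply Rmin_pos; lra).
    exists (mkposreal _ Hd); intros h Hh0 Hh; simpl in Hh.
    assert (Hh1 : Rabs h < 1) by (apply Rlt_le_trans with (1 := Hh), Rmin_l).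
    assert (Hh2 : Rabs h < eps) by (apply Rlt_le_trans with (1 := Hh), Rmin_r).
    assert (Hpos : 0 < Rabs h) by (apply Rabs_pos_lt; exact Hh0).
    cbv beta; rewrite Rmult_0_l, Rplus_0_l.
    replace ((h * rpow (Rabs h) p - 0) / h - 0) with (rpow (Rabs h) p) by (field; exact Hh0).
    rewrite rpow_Rpower by lra.
    pose proof (Rpower_le_self (Rabs h) p (conj Hpos Hh1) Hp).
    rewrite Rabs_right by (left; apply Rpower_gt0); lra.
Qed.

Lemma derivable_pt_lim_neg_right f x l : derivable_pt_lim f x l -> l < 0 ->
  exists d, 0 < d /\ forall t, x < t < x + d -> f t < f x.
Proof.
  intros Hf Hl; destruct (Hf (- l) ltac:(lra)) as [d Hd].
  exists d; split; [apply cond_pos|]; intros t Ht.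
  specialize (Hd (t - x) ltac:(lra) ltac:(rewrite Rabs_right; lra)).
  replace (x + (t - x)) with t in Hd by ring.
  apply Rabs_def2 in Hd; destruct Hd as [Hd _].
  assert (Hq : (f t - f x) / (t - x) < 0) by lra.
  assert (E : f t - f x = (f t - f x) / (t - x) * (t - x)) by (field; lra).
  nra.
Qed.

Lemma derivable_pt_lim_0_const f a b : a <= b ->
  (forall x, a <= x <= b -> derivable_pt_lim f x 0) -> f b = f a.
Proof.
  intros [Hab| <-] Hf; [|reflexivity].
  destruct (MVT_cor2 f (fun _ => 0) a b Hab Hf) as [c [Hc _]]; lra.
Qed.

(* The weight (x0 - f s) e^((K+1) s) is nondecreasing, since K + 1 >= sqrt K. *)
Lemma below_of_deriv_sq_le f f' a b x0 K : a < b -> 0 <= K ->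
  (forall s, a <= s <= b -> derivable_pt_lim f s (f' s)) ->
  (forall s, a <= s <= b -> f s <= x0) ->
  (forall s, a <= s <= b -> f' s ^ 2 <= K * (x0 - f s) ^ 2) ->
  f a < x0 -> f b < x0.
Proof.
  intros Hab HK Hf Hle Hsq Ha.
  set (C := K + 1).
  set (w := fun s => (x0 - f s) * exp (C * s)).
  set (w' := fun s => - f' s * exp (C * s) + (x0 - f s) * (exp (C * s) * (C * 1))).
  assert (Hw : forall s, a <= s <= b -> derivable_pt_lim w s (w' s)).
  { intros s Hs; unfold w, w'.
    apply (derivable_pt_lim_mult (fun s => x0 - f s) (fun s => exp (C * s))).
    - replace (- f' s) with (0 - f' s) by ring.
      apply (derivable_pt_lim_minus (fun _ => x0) f); [apply derivable_pt_lim_const|auto].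
    - apply (derivable_pt_lim_comp (fun s => C * s) exp);
        [apply derivable_pt_lim_scal, derivable_pt_lim_id|apply derivable_pt_lim_exp]. }
  assert (Hw'_ge0 : forall s, a <= s <= b -> 0 <= w' s).
  { intros s Hs; unfold w'.
    pose proof (Hle s Hs); pose proof (Hsq s Hs); pose proof (exp_pos (C * s)).
    assert (f' s <= C * (x0 - f s)).
    { destruct (Rle_lt_dec (f' s) (C * (x0 - f s))) as [|Hlt]; [assumption|].
      assert (K * (x0 - f s) ^ 2 <= C * C * (x0 - f s) ^ 2)
        by (apply Rmult_le_compat_r; [nra|unfold C; nra]).
      assert (0 <= C * (x0 - f s)) by (unfold C; nra).
      nra. }
    nra. }
  destruct (MVT_cor2 w w' a b Hab Hw) as [xi [Hxi Hxi_in]].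
  pose proof (Hw'_ge0 xi ltac:(lra)).
  assert (Hwa : 0 < w a) by (unfold w; pose proof (exp_pos (C * a)); nra).
  assert (Hwb : 0 < w b) by nra.
  unfold w in Hwb; pose proof (exp_pos (C * b)); nra.
Qed.

Definition bernoulli_gap (g t : R) : R := rpow t g - 1 - g * (t - 1).

Lemma bernoulli_gap_mvt g t : 0 < t -> t <> 1 ->
  exists c, Rmin t 1 < c < Rmax t 1 /\
    bernoulli_gap g t = g * (rpow c (g - 1) - 1) * (t - 1).
Proof.
  intros Ht Ht1.
  assert (Hd : forall s, 0 < s ->
    derivable_pt_lim (bernoulli_gap g) s (g * (rpow s (g - 1) - 1))).
  { intros s Hs; unfold bernoulli_gap.
    replace (g * (rpow s (g - 1) - 1)) with (g * rpow s (g - 1) - 0 - g * (1 - 0)) by ring.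
    apply derivable_pt_lim_minus; [apply derivable_pt_lim_minus|].
    - apply derivable_pt_lim_rpow; exact Hs.
    - apply derivable_pt_lim_const.
    - apply derivable_pt_lim_scal, derivable_pt_lim_minus;
        [apply derivable_pt_lim_id|apply derivable_pt_lim_const]. }
  assert (Hgap1 : bernoulli_gap g 1 = 0)
    by (unfold bernoulli_gap; rewrite rpow_Rpower, Rpower_base_1; lra).
  destruct (Rlt_dec t 1) as [Hlt|Hge].
  - destruct (MVT_cor2 _ _ t 1 Hlt (fun c Hc => Hd c ltac:(lra))) as [c [Hc ?]].
    exists c; rewrite Rmin_left, Rmax_right by lra; split; [lra|nra].
  - destruct (MVT_cor2 _ _ 1 t ltac:(lra) (fun c Hc => Hd c ltac:(lra))) as [c [Hc ?]].
    exists c; rewrite Rmin_right, Rmax_left by lra; split; [lra|nra].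
Qed.

Lemma bernoulli_gap_gt0 g t : 1 < g -> 0 <= t -> t <> 1 -> 0 < bernoulli_gap g t.
Proof.
  intros Hg [Ht| <-] Ht1.
  2: { unfold bernoulli_gap; rewrite rpow_nonpos; lra. }
  destruct (bernoulli_gap_mvt g t Ht Ht1) as [c [Hc ->]].
  destruct (Rlt_dec t 1) as [Hlt|Hge].
  - rewrite Rmin_left, Rmax_right in Hc by lra.
    rewrite rpow_Rpower by lra.
    pose proof (Rlt_Rpower_l c 1 (g - 1) ltac:(lra) ltac:(lra)) as Hcg.
    rewrite Rpower_base_1 in Hcg.
    replace (g * (Rpower c (g - 1) - 1) * (t - 1))
      with (g * ((1 - Rpower c (g - 1)) * (1 - t))) by ring.
    apply Rmult_lt_0_compat; [|apply Rmult_lt_0_compat]; lra.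
  - rewrite Rmin_right, Rmax_left in Hc by lra.
    rewrite rpow_Rpower by lra.
    pose proof (Rlt_Rpower_l 1 c (g - 1) ltac:(lra) ltac:(lra)) as Hcg.
    rewrite Rpower_base_1 in Hcg.
    apply Rmult_lt_0_compat; [apply Rmult_lt_0_compat|]; lra.
Qed.

Lemma bernoulli_gap_ge0 g t : 1 <= g -> 0 <= t -> 0 <= bernoulli_gap g t.
Proof.
  intros [Hg| <-] Ht.
  - destruct (Req_dec t 1) as [->|Ht1]; [|left; apply bernoulli_gap_gt0; lra].
    unfold bernoulli_gap; rewrite rpow_Rpower, Rpower_base_1; lra.
  - unfold bernoulli_gap; destruct Ht as [Ht| <-].
    + rewrite rpow_Rpower, Rpower_1; lra.
    + rewrite rpow_nonpos; lra.
Qed.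

Lemma bernoulli_gap_le_sq g t : 2 <= g -> 0 <= t <= 1 ->
  bernoulli_gap g t <= g * (g - 1) * (1 - t) ^ 2.
Proof.
  intros Hg [[Ht| <-] Ht1].
  2: { unfold bernoulli_gap; rewrite rpow_nonpos; nra. }
  destruct (Req_dec t 1) as [->|Hne].
  { unfold bernoulli_gap; rewrite rpow_Rpower, Rpower_base_1; nra. }
  destruct (bernoulli_gap_mvt g t Ht Hne) as [c [Hc ->]].
  rewrite Rmin_left, Rmax_right in Hc by lra.
  pose proof (bernoulli_gap_ge0 (g - 1) c ltac:(lra) ltac:(lra)) as Hb.
  unfold bernoulli_gap in Hb.
  assert (H1c : 1 - rpow c (g - 1) <= (g - 1) * (1 - t)) by nra.
  replace (g * (rpow c (g - 1) - 1) * (t - 1))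
    with (g * (1 - t) * (1 - rpow c (g - 1))) by ring.
  replace (g * (g - 1) * (1 - t) ^ 2) with (g * (1 - t) * ((g - 1) * (1 - t))) by ring.
  apply Rmult_le_compat_l; [apply Rmult_le_pos|]; lra.
Qed.

Definition quad_sub_pow (c K b h : R) : R := (h - c) ^ 2 - K * Rpower h b.

Section QuadSubPow.

Variables c K b : R.
Hypothesis c_gt0 : 0 < c.
Hypothesis K_gt0 : 0 < K.
Hypothesis b_bounds : 0 < b < 2.

(* For h > c the sign of quad_sub_pow at h is that of ((h - c) / h^(b/2))^2 - K,
   and (h - c) / h^(b/2) is increasing. *)
Lemma quad_sub_pow_crossing u v : c < u < v ->
  0 <= quad_sub_pow c K b u -> 0 < quad_sub_pow c K b v.
Proof.
  intros Huv Hu; unfold quad_sub_pow in *.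
  set (e := b / 2).
  assert (He : 0 < e < 1) by (unfold e; lra).
  set (ratio := fun h => Rpower h (1 - e) - c / Rpower h e).
  assert (Hsplit : forall h, 0 < h ->
    h - c = Rpower h e * ratio h /\ Rpower h b = Rpower h e * Rpower h e).
  { intros h Hh; pose proof (Rpower_gt0 h e); unfold ratio; split.
    - rewrite <- (Rpower_1 h) at 1 by lra.
      replace 1 with (e + (1 - e)) at 1 by ring.
      rewrite Rpower_plus; field; lra.
    - rewrite <- Rpower_plus; f_equal; unfold e; field. }
  destruct (Hsplit u ltac:(lra)) as [Eu Eub]; destruct (Hsplit v ltac:(lra)) as [Ev Evb].
  rewrite Eu, Eub in Hu; rewrite Ev, Evb.
  pose proof (Rpower_gt0 u e); pose proof (Rpower_gt0 v e).
  assert (Hratio_u : 0 < ratio u).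
  { apply (Rmult_lt_reg_l (Rpower u e)); [lra|]; rewrite <- Eu; lra. }
  assert (Hratio_uv : ratio u < ratio v).
  { unfold ratio.
    assert (Rpower u (1 - e) < Rpower v (1 - e)) by (apply Rlt_Rpower_l; lra).
    assert (Rpower u e < Rpower v e) by (apply Rlt_Rpower_l; lra).
    assert (c / Rpower v e < c / Rpower u e)
      by (apply Rmult_lt_compat_l; [lra|apply Rinv_lt_contravar; nra]).
    lra. }
  assert (HK : K <= ratio u ^ 2).
  { apply (Rmult_le_reg_l (Rpower u e * Rpower u e)); nra. }
  assert (ratio u ^ 2 < ratio v ^ 2) by nra.
  assert (0 < Rpower v e * Rpower v e) by nra.
  replace ((Rpower v e * ratio v) ^ 2 - K * (Rpower v e * Rpower v e))
    with (Rpower v e * Rpower v e * (ratio v ^ 2 - K)) by ring.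
  apply Rmult_lt_0_compat; lra.
Qed.

Lemma quad_sub_pow_root_unique u v : c < u -> c < v ->
  quad_sub_pow c K b u = 0 -> quad_sub_pow c K b v = 0 -> u = v.
Proof.
  intros Hu Hv Eu Ev.
  destruct (Rtotal_order u v) as [Huv|[Huv|Huv]]; [|exact Huv|].
  - pose proof (quad_sub_pow_crossing u v ltac:(lra) ltac:(lra)); lra.
  - pose proof (quad_sub_pow_crossing v u ltac:(lra) ltac:(lra)); lra.
Qed.

Lemma lt_quad_sub_pow_root u z : c < u -> quad_sub_pow c K b u < 0 ->
  c < z -> quad_sub_pow c K b z = 0 -> u < z.
Proof.
  intros Hu Hneg Hz Ez.
  destruct (Rtotal_order u z) as [Huz|[Huz|Huz]]; [exact Huz| |].
  - subst; lra.
  - pose proof (quad_sub_pow_crossing z u ltac:(lra) ltac:(lra)); lra.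
Qed.

Lemma quad_sub_pow_eventually_pos : exists B, c < B /\ 0 < quad_sub_pow c K b B.
Proof.
  set (B := Rmax (2 * c) (Rpower (4 * K + 1) (/ (2 - b)))).
  assert (HB1 : 2 * c <= B) by apply Rmax_l.
  assert (HB2 : Rpower (4 * K + 1) (/ (2 - b)) <= B) by apply Rmax_r.
  assert (Hpow : 4 * K + 1 <= Rpower B (2 - b)).
  { replace (4 * K + 1) with (Rpower (Rpower (4 * K + 1) (/ (2 - b))) (2 - b)) at 1
      by (rewrite Rpower_mult, Rinv_l, Rpower_1; lra).
    apply Rle_Rpower_l; [lra|split; [apply Rpower_gt0|exact HB2]]. }
  assert (HBsq : B * B = Rpower B b * Rpower B (2 - b)).
  { rewrite <- Rpower_plus; replace (b + (2 - b)) with (INR 2) by (simpl; ring).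
    rewrite Rpower_pow by lra; simpl; ring. }
  exists B; split; [lra|]; unfold quad_sub_pow.
  pose proof (Rpower_gt0 B b).
  assert (B * B / 4 <= (B - c) ^ 2) by nra.
  assert (K * Rpower B b < Rpower B b * Rpower B (2 - b) / 4) by nra.
  lra.
Qed.

Lemma quad_sub_pow_continuous h : 0 < h -> continuity_pt (quad_sub_pow c K b) h.
Proof.
  intros Hh; apply derivable_continuous_pt.
  exists ((1 - 0) * (h - c) + (h - c) * (1 - 0) - K * (b * Rpower h (b - 1))).
  apply derivable_pt_lim_minus; [|apply derivable_pt_lim_scal, derivable_pt_lim_power; lra].
  assert (Hlin : derivable_pt_lim (fun x => x - c) h (1 - 0))
    by (apply derivable_pt_lim_minus; [apply derivable_pt_lim_id|apply derivable_pt_lim_const]).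
  apply (derivable_pt_lim_ext (fun x => (x - c) * (x - c))); [intros; ring|].
  apply (derivable_pt_lim_mult (fun x => x - c) (fun x => x - c)); exact Hlin.
Qed.

Lemma quad_sub_pow_root_exists : exists z, c < z /\ quad_sub_pow c K b z = 0.
Proof.
  destruct quad_sub_pow_eventually_pos as [B [HcB HB]].
  assert (Hc : quad_sub_pow c K b c < 0).
  { unfold quad_sub_pow; pose proof (Rpower_gt0 c b).
    replace ((c - c) ^ 2) with 0 by ring; nra. }
  destruct (Ranalysis5.IVT_interv _ c B
    (fun h Hh => quad_sub_pow_continuous h ltac:(lra)) HcB Hc HB) as [z [Hz Ez]].
  exists z; split; [|exact Ez].
  destruct (proj1 Hz) as [|<-]; [assumption|lra].
Qed.

End QuadSubPow.

Lemma alpha_of_gt1 q : 1 < q -> 1 < alpha_of q.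
Proof.
  intros Hq; unfold alpha_of; apply (Rmult_lt_reg_r (q - 1)); [lra|].
  unfold Rdiv; rewrite Rmult_assoc, Rinv_l; lra.
Qed.

Lemma c_of_gt0 A q : 1 < q -> 0 < A -> 0 < c_of A q.
Proof.
  intros Hq HA; unfold c_of; rewrite rpow_Rpower.
  - apply Rmult_lt_0_compat; [lra|apply Rpower_gt0].
  - apply Rdiv_lt_0_compat; [apply Rmult_lt_0_compat|]; lra.
Qed.

(* The zero of f_H'(x) = 2 x^alpha - 4 H on [0, oo). *)
Definition f_H_min_point (q H : R) : R := rpow (2 * H) (/ alpha_of q).

Section F_H.

Variables (A q H : R).
Hypothesis alpha_gt1 : 1 < alpha_of q.

Lemma f_H_nonneg_eq x : 0 <= x ->
  f_H A q H x = 2 / (alpha_of q + 1) * rpow x (alpha_of q + 1) - 4 * H * x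
                + (H - c_of A q) ^ 2.
Proof. intros Hx; unfold f_H; rewrite Rabs_right, rpow_plus_1 by lra; ring. Qed.

Lemma derivable_pt_lim_f_H s : 0 <= s ->
  derivable_pt_lim (f_H A q H) s (2 * rpow s (alpha_of q) - 4 * H).
Proof.
  intros Hs; set (a := alpha_of q) in *.
  apply (derivable_pt_lim_ext
    (fun x => 2 / (a + 1) * (x * rpow (Rabs x) a) - 4 * H * x + (H - c_of A q) ^ 2));
    [intros x; unfold f_H; fold a; ring|].
  replace (2 * rpow s a - 4 * H) with (2 / (a + 1) * ((a + 1) * rpow s a) - 4 * H * 1 + 0)
    by (field; lra).
  apply derivable_pt_lim_plus; [apply derivable_pt_lim_minus|].
  - apply derivable_pt_lim_scal, derivable_pt_lim_mul_rpow_abs; lra.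
  - apply derivable_pt_lim_scal, derivable_pt_lim_id.
  - apply derivable_pt_lim_const.
Qed.

Hypothesis H_gt0 : 0 < H.

Lemma f_H_min_point_gt0 : 0 < f_H_min_point q H.
Proof. unfold f_H_min_point; rewrite rpow_Rpower by lra; apply Rpower_gt0. Qed.

Lemma rpow_f_H_min_point : rpow (f_H_min_point q H) (alpha_of q) = 2 * H.
Proof. apply rpow_rpow_inv; lra. Qed.

Lemma f_H_sub_min x : 0 <= x ->
  f_H A q H x - f_H A q H (f_H_min_point q H) =
  4 * H * f_H_min_point q H / (alpha_of q + 1)
  * bernoulli_gap (alpha_of q + 1) (x / f_H_min_point q H).
Proof.
  intros Hx; pose proof f_H_min_point_gt0 as Hx0; pose proof rpow_f_H_min_point as Hx0a.
  set (x0 := f_H_min_point q H) in *; set (a := alpha_of q) in *.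
  assert (Hxx0 : 0 <= x / x0) by (apply Rmult_le_pos; [|left; apply Rinv_0_lt_compat]; lra).
  rewrite !f_H_nonneg_eq by lra; fold a; unfold bernoulli_gap.
  replace (rpow x (a + 1)) with (rpow (x0 * (x / x0)) (a + 1)) by (f_equal; field; lra).
  rewrite rpow_mult, (rpow_plus_1 x0), Hx0a by lra.
  field; split; lra.
Qed.

Lemma f_H_min_lt x : 0 <= x -> x <> f_H_min_point q H ->
  f_H A q H (f_H_min_point q H) < f_H A q H x.
Proof.
  intros Hx Hne; pose proof (f_H_sub_min x Hx) as E; pose proof f_H_min_point_gt0.
  assert (0 < bernoulli_gap (alpha_of q + 1) (x / f_H_min_point q H)).
  { apply bernoulli_gap_gt0; [lra| |].
    - apply Rmult_le_pos; [|left; apply Rinv_0_lt_compat]; lra.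
    - intros E1; apply Hne; unfold Rdiv in E1.
      apply (Rmult_eq_reg_r (/ f_H_min_point q H));
        [rewrite Rinv_r; lra|apply Rinv_neq_0_compat; lra]. }
  assert (0 < 4 * H * f_H_min_point q H / (alpha_of q + 1))
    by (apply Rdiv_lt_0_compat; [|lra]; nra).
  nra.
Qed.

Lemma f_H_le_sq_of_min_root : f_H A q H (f_H_min_point q H) = 0 ->
  exists K, 0 <= K /\ forall x, 0 <= x <= f_H_min_point q H ->
    f_H A q H x <= K * (f_H_min_point q H - x) ^ 2.
Proof.
  intros Hmin; pose proof f_H_min_point_gt0 as Hx0.
  set (x0 := f_H_min_point q H) in *; set (a := alpha_of q) in *.
  exists (4 * H * a / x0); split; [apply Rmult_le_pos; [nra|left; apply Rinv_0_lt_compat; lra]|].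
  intros x Hx.
  pose proof (f_H_sub_min x (proj1 Hx)) as E; fold x0 a in E; rewrite Hmin, Rminus_0_r in E.
  rewrite E.
  assert (Hgap : bernoulli_gap (a + 1) (x / x0) <= (a + 1) * (a + 1 - 1) * (1 - x / x0) ^ 2).
  { apply bernoulli_gap_le_sq; [lra|split].
    - apply Rmult_le_pos; [|left; apply Rinv_0_lt_compat]; lra.
    - apply (Rmult_le_reg_r x0); [lra|]; unfold Rdiv; rewrite Rmult_assoc, Rinv_l; lra. }
  apply Rle_trans with (4 * H * x0 / (a + 1) * ((a + 1) * (a + 1 - 1) * (1 - x / x0) ^ 2)).
  - apply Rmult_le_compat_l; [apply Rmult_le_pos; [nra|left; apply Rinv_0_lt_compat; lra]|lra].
  - right; field; lra.
Qed.

Definition f_H_min_coef (q : R) : R :=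
  4 * alpha_of q / (alpha_of q + 1) * Rpower 2 (/ alpha_of q).

Lemma f_H_at_min_point :
  f_H A q H (f_H_min_point q H) =
  quad_sub_pow (c_of A q) (f_H_min_coef q) (1 + / alpha_of q) H.
Proof.
  unfold quad_sub_pow.
  pose proof f_H_min_point_gt0 as Hx0; pose proof rpow_f_H_min_point as Hx0a.
  rewrite f_H_nonneg_eq, rpow_plus_1, Hx0a by lra.
  unfold f_H_min_coef, f_H_min_point; rewrite rpow_Rpower by lra.
  rewrite <- Rpower_mult_distr, Rpower_plus, Rpower_1 by lra.
  field; lra.
Qed.

End F_H.

Lemma f_H_min_coef_gt0 q : 1 < alpha_of q -> 0 < f_H_min_coef q.
Proof.
  intros Ha; unfold f_H_min_coef.
  apply Rmult_lt_0_compat; [apply Rdiv_lt_0_compat; lra|apply Rpower_gt0].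
Qed.

Lemma min_exponent_bounds q : 1 < alpha_of q -> 0 < 1 + / alpha_of q < 2.
Proof.
  intros Ha; assert (0 < / alpha_of q < 1); [|lra].
  split; [apply Rinv_0_lt_compat; lra|rewrite <- Rinv_1; apply Rinv_lt_contravar; lra].
Qed.

Lemma is_h_iff A q h : 1 < alpha_of q -> 0 < c_of A q ->
  is_h A q h <-> c_of A q < h /\
    quad_sub_pow (c_of A q) (f_H_min_coef q) (1 + / alpha_of q) h = 0.
Proof.
  intros Ha Hc; unfold is_h; change (rpow (2 * h) (/ alpha_of q)) with (f_H_min_point q h).
  split; intros [Hh E]; split; try exact Hh;
    rewrite <- E, f_H_at_min_point by lra; reflexivity.
Qed.

Section AssociatedProfile.

Variables (A q H : R) (Psi dPsi d2Psi : R -> R).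
Hypothesis alpha_gt1 : 1 < alpha_of q.
Hypothesis c_gt0 : 0 < c_of A q.
Hypothesis Psi_pos : forall x, 0 < x < 1 -> Psi x > 0.
Hypothesis Psi_ode : forall x, in01 x ->
  derivable_pt_lim Psi x (dPsi x) /\ derivable_pt_lim dPsi x (d2Psi x) /\
  d2Psi x - rpow (Rabs (Psi x)) (alpha_of q) + 2 * H = 0.
Hypothesis Psi_0 : Psi 0 = 0.
Hypothesis Psi_1 : Psi 1 = 0.
Hypothesis dPsi_0 : dPsi 0 = H - c_of A q.

Lemma Psi_nonneg x : in01 x -> 0 <= Psi x.
Proof.
  intros [[Hx0| <-] Hx1]; [|rewrite Psi_0; lra].
  destruct Hx1 as [Hx1| ->]; [left; apply Psi_pos; lra|rewrite Psi_1; lra].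
Qed.

Lemma c_lt_H : c_of A q < H.
Proof.
  assert (in01 0) by (unfold in01; lra).
  destruct (Rtotal_order (c_of A q) H) as [Hlt|[Heq|Hgt]]; [exact Hlt|exfalso..].
  - destruct (Psi_ode 0) as (_ & Hd2 & Hode0); [assumption|].
    rewrite Psi_0, Rabs_R0, rpow_nonpos in Hode0 by lra.
    destruct (derivable_pt_lim_neg_right dPsi 0 (d2Psi 0) Hd2 ltac:(lra)) as [d [Hd Hneg]].
    set (t := Rmin d 1 / 2).
    assert (Ht : 0 < t < Rmin d 1) by (unfold t; pose proof (Rmin_pos d 1); lra).
    pose proof (Rmin_l d 1); pose proof (Rmin_r d 1).
    destruct (MVT_cor2 Psi dPsi 0 t ltac:(lra)
      (fun s Hs => proj1 (Psi_ode s ltac:(unfold in01; lra)))) as [xi [Hxi Hxi_in]].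
    pose proof (Hneg xi ltac:(lra)); pose proof (Psi_pos t ltac:(lra)).
    rewrite Psi_0, dPsi_0 in *; nra.
  - destruct (Psi_ode 0) as (Hd & _ & _); [assumption|].
    rewrite dPsi_0 in Hd.
    destruct (derivable_pt_lim_neg_right Psi 0 _ Hd ltac:(lra)) as [d [Hd0 Hneg]].
    set (t := Rmin d 1 / 2).
    assert (Ht : 0 < t < Rmin d 1) by (unfold t; pose proof (Rmin_pos d 1); lra).
    pose proof (Rmin_l d 1); pose proof (Rmin_r d 1).
    pose proof (Hneg t ltac:(lra)); pose proof (Psi_pos t ltac:(lra)); lra.
Qed.

Lemma Psi_first_integral x : in01 x -> dPsi x ^ 2 = f_H A q H (Psi x).
Proof.
  intros Hx.
  assert (Hconst : forall s, 0 <= s <= x ->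
    derivable_pt_lim (fun t => dPsi t * dPsi t - f_H A q H (Psi t)) s 0).
  { intros s Hs; assert (Hs01 : in01 s) by (unfold in01 in *; lra).
    destruct (Psi_ode s Hs01) as (HdP & Hd2P & Hode).
    pose proof (Psi_nonneg s Hs01) as HPs; rewrite Rabs_right in Hode by lra.
    replace 0 with (d2Psi s * dPsi s + dPsi s * d2Psi s
                    - (2 * rpow (Psi s) (alpha_of q) - 4 * H) * dPsi s) by nra.
    apply (derivable_pt_lim_minus (fun t => dPsi t * dPsi t) (fun t => f_H A q H (Psi t))).
    - apply (derivable_pt_lim_mult dPsi dPsi); exact Hd2P.
    - apply (derivable_pt_lim_comp Psi (f_H A q H)); [exact HdP|].
      apply derivable_pt_lim_f_H; assumption. }
  pose proof (derivable_pt_lim_0_const _ 0 x (proj1 Hx) Hconst) as E; simpl in E.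
  rewrite Psi_0, dPsi_0 in E; unfold f_H at 2 in E; rewrite Rabs_R0, rpow_nonpos in E by lra.
  simpl; lra.
Qed.

Lemma Psi_interior_max : exists m, 0 < m < 1 /\
  (forall x, in01 x -> Psi x <= Psi m) /\ dPsi m = 0.
Proof.
  destruct (continuity_ab_maj Psi 0 1 ltac:(lra) (fun x Hx =>
    derivable_continuous_pt Psi x (exist _ (dPsi x) (proj1 (Psi_ode x Hx)))))
    as [m [Hmax Hm]].
  assert (Hm01 : 0 < m < 1).
  { pose proof (Psi_pos (1 / 2) ltac:(lra)); pose proof (Hmax (1 / 2) ltac:(lra)).
    destruct Hm as [[Hm0| <-] [Hm1| ->]]; rewrite ?Psi_0, ?Psi_1 in *; lra. }
  exists m; split; [exact Hm01|split; [exact Hmax|]].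
  exact (deriv_maximum Psi 0 1 m (exist _ (dPsi m) (proj1 (Psi_ode m ltac:(unfold in01; lra))))
    (proj1 Hm01) (proj2 Hm01) (fun x Hx0 Hx1 => Hmax x ltac:(lra))).
Qed.

Lemma f_H_min_point_neg : f_H A q H (f_H_min_point q H) < 0.
Proof.
  assert (HH : 0 < H) by (pose proof c_lt_H; lra).
  destruct Psi_interior_max as [m [Hm [Hmax HdPm]]].
  assert (Hm01 : in01 m) by (unfold in01; lra).
  assert (HfM : f_H A q H (Psi m) = 0) by (rewrite <- Psi_first_integral, HdPm by exact Hm01; ring).
  destruct (Req_dec (Psi m) (f_H_min_point q H)) as [HM|HM].
  2: { rewrite <- HfM; apply f_H_min_lt; auto using Psi_nonneg. }
  exfalso; rewrite HM in HfM.
  destruct (f_H_le_sq_of_min_root A q H alpha_gt1 HH HfM) as [K [HK Hbound]].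
  assert (Hreach : Psi m < f_H_min_point q H).
  { apply (below_of_deriv_sq_le Psi dPsi 0 m _ K (proj1 Hm) HK).
    - intros s Hs; apply Psi_ode; unfold in01; lra.
    - intros s Hs; rewrite <- HM; apply Hmax; unfold in01; lra.
    - intros s Hs; assert (Hs01 : in01 s) by (unfold in01; lra).
      rewrite Psi_first_integral by exact Hs01; apply Hbound.
      split; [apply Psi_nonneg|rewrite <- HM; apply Hmax]; exact Hs01.
    - rewrite Psi_0; apply f_H_min_point_gt0; assumption. }
  lra.
Qed.

End AssociatedProfile.

Theorem mainTheorem17 (q A : R) (V : R -> R) (H : R) (Psi : R -> R) :
  1 < q -> 0 < A ->
  is_maximizer q A V ->
  associated A q V H Psi ->
  c_of A q < H /\
  exists h, is_h A q h /\ (forall h', is_h A q h' -> h' = h) /\ H < h.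
Proof.
  intros Hq HA _ [dPsi [d2Psi [Hpos [Hode [HP0 [HP1 [Hd0 _]]]]]]].
  pose proof (alpha_of_gt1 q Hq) as Ha; pose proof (c_of_gt0 A q Hq HA) as Hc.
  pose proof (f_H_min_coef_gt0 q Ha) as HK; pose proof (min_exponent_bounds q Ha) as Hb.
  pose proof (c_lt_H A q H Psi dPsi d2Psi Hc Hpos Hode HP0 Hd0) as HcH.
  pose proof (f_H_min_point_neg A q H Psi dPsi d2Psi Ha Hc Hpos Hode HP0 HP1 Hd0) as Hneg.
  rewrite f_H_at_min_point in Hneg by lra.
  destruct (quad_sub_pow_root_exists _ _ _ Hc HK Hb) as [z [Hz Ez]].
  split; [exact HcH|exists z; split; [|split]].
  - apply is_h_iff; auto.
  - intros h' Hh'; apply is_h_iff in Hh' as [Hh' E']; auto.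
    apply (quad_sub_pow_root_unique _ (f_H_min_coef q) _ Hc Hb); auto.
  - apply (lt_quad_sub_pow_root _ (f_H_min_coef q) _ Hc Hb); auto.
Qed.
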